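(* Let $e$ be a finite set with $|e|\ge 2$, $\gamma_e:e\to\mathbb{R}_{+}$, $\gamma_e(\mathcal{S})=\sum_{v\in\mathcal{S}}\gamma_e(v)$, and let $g_e:[0,\gamma_e(e)]\to\mathbb{R}_{\ge0}$ be concave with $g_e(0)=g_e(\gamma_e(e))=0$. Let $w_e(\mathcal{S})=g_e(\gamma_e(\mathcal{S}))$ for $\mathcal{S}\subseteq e$. Define $\mathcal{Q}_a=\{\gamma_e(\mathcal{S}):\emptyset\ne\mathcal{S}\subsetneq e\}$ and $\mathcal{Q}_s=\{\gamma_e(\mathcal{S}):\mathcal{S}\subseteq e,\ 0<\gamma_e(\mathcal{S})\le\gamma_e(e)/2\}$. Then: (i) $w_e$ is graph reducible. More precisely, with $r=|\mathcal{Q}_a|$ and $b_1<\dots<b_r$ the elements of $\mathcal{Q}_a$, there exist nonnegative coefficients $a_1,\dots,a_r$ such that for all $\mathcal{S}\subseteq e$, $$w_e(\mathcal{S})=\sum_{i=1}^r a_i\min\{(\gamma_e(e)-b_i)\gamma_e(\mathcal{S}),\ b_i\gamma_e(e\setminus\mathcal{S})\},$$ so that $w_e$ is the gadget splitting function of the graph obtained as the union, over $i=1,\dots,r$, of asymmetric EDVWs-based gadgets with parameters $(a,b)=(a_i(\gamma_e(e)-b_i),\ a_ib_i)$, each with its own auxiliary vertex and all sharing the vertex set $e$ (edges of coefficient zero may be dropped). In particular $w_e$ is the gadget splitting function of a combination of at most $|\mathcal{Q}_a|$ asymmetric EDVWs-based gadgets. (ii) If in addition $g_e$ is symmetric, i.e.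 $g_e(x)=g_e(\gamma_e(e)-x)$ for all $x$, then with $r=|\mathcal{Q}_s|$ and $b_1<\dots<b_r$ the elements of $\mathcal{Q}_s$, there exist nonnegative coefficients $a_1,\dots,a_r$ such that for all $\mathcal{S}\subseteq e$, $$w_e(\mathcal{S})=\sum_{i=1}^r a_i\min\{\gamma_e(\mathcal{S}),\ \gamma_e(e\setminus\mathcal{S}),\ b_i\},$$ so that $w_e$ is the gadget splitting function of the union over $i$ of symmetric EDVWs-based gadgets with parameter $b=b_i$ and all edge weights multiplied by $a_i$, each with its own pair of auxiliary vertices and all sharing the vertex set $e$; i.e. a combination of at most $|\mathcal{Q}_s|$ symmetric EDVWs-based gadgets.
   Context: For a weighted, possibly directed graph $\mathcal{G}$ with vertex set $\mathcal{V}$ and weights $W_{uv}$ (weight of edge from $u$ to $v$), $\mathrm{cut}_{\mathcal{G}}(\mathcal{T})=\sum_{u\in\mathcal{T},v\in\mathcal{V}\setminus\mathcal{T}}W_{uv}$. A gadget for a hyperedge $e$ is a weighted, possibly directed graph $\mathcal{G}_e$ with vertex set $\mathcal{V}'=e\cup\hat{\mathcal{V}}$, $\hat{\mathcal{V}}$ a set of auxiliary vertices disjoint from $e$; its gadget splitting function is $\hat w_e(\mathcal{S})=\min_{\mathcal{T}\subseteq\mathcal{V}',\,\mathcal{T}\cap e=\mathcal{S}}\mathrm{cut}_{\mathcal{G}_e}(\mathcal{T})$. A splitting function is graph reducible if it equals some gadget splitting function. The symmetric EDVWs-based gadget with parameter $b>0$ is the directed graph on $e\cup\{e',e''\}$ with,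 for each $v\in e$, an edge $v\to e'$ of weight $\gamma_e(v)$ and an edge $e''\to v$ of weight $\gamma_e(v)$, plus an edge $e'\to e''$ of weight $b$; its gadget splitting function is $\min\{\gamma_e(\mathcal{S}),\gamma_e(e\setminus\mathcal{S}),b\}$. The asymmetric EDVWs-based gadget with parameters $a,b\ge0$ is the directed graph on $e\cup\{v_e\}$ with, for each $v\in e$, an edge $v\to v_e$ of weight $a\gamma_e(v)$ and an edge $v_e\to v$ of weight $b\gamma_e(v)$; its gadget splitting function is $\min\{a\gamma_e(\mathcal{S}),b\gamma_e(e\setminus\mathcal{S})\}$. *)

From HB Require Import structures.
From mathcomp Require Import all_boot all_order all_algebra.
Set Implicit Arguments. Unset Strict Implicit. Unset Printing Implicit Defensive.
Import Order.TTheory GRing.Theory Num.Theory.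
Local Open Scope ring_scope.

Section Defs.
Variable R : realFieldType.

Definition cut (V : finType) (W : V -> V -> R) (T : {set V}) : R :=
  \sum_(u in T) \sum_(v in ~: T) W u v.

(** f is the gadget splitting function of the gadget (V, W), where the
    hyperedge e is embedded in V by emb (auxiliary vertices = the rest):
    f S = min { cut T | T ∩ e = S }. *)
Definition is_gadget_split (e V : finType) (emb : e -> V) (W : V -> V -> R)
    (f : {set e} -> R) : Prop :=
  forall S : {set e},
    (exists T : {set V}, [set x | emb x \in T] = S /\ cut W T = f S) /\
    (forall T : {set V}, [set x | emb x \in T] = S -> f S <= cut W T).

Definition graph_reducible (e : finType) (f : {set e} -> R) : Prop :=
  exists (V : finType) (emb : e -> V) (W : V -> V -> R),
    injective emb /\ (forall u v, 0 <= W u v) /\ is_gadget_split emb W f.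

Definition gammaS (e : finType) (gamma : e -> R) (S : {set e}) : R :=
  \sum_(v in S) gamma v.

Definition Qa (e : finType) (gamma : e -> R) : seq R :=
  undup [seq gammaS gamma A | A <- enum [set: {set e}] &
                               (A != set0) && (A != setT)].

Definition Qs (e : finType) (gamma : e -> R) : seq R :=
  undup [seq gammaS gamma A | A <- enum [set: {set e}] &
           (0 < gammaS gamma A) && (gammaS gamma A <= gammaS gamma setT / 2%:R)].

(** Union of asymmetric EDVWs-based gadgets, the i-th with parameters
    (p_i.1, p_i.2) = (a, b) and its own auxiliary vertex inr i:
    edges v -> v_i of weight a*gamma v and v_i -> v of weight b*gamma v. *)
Definition asym_union_W (e : finType) (gamma : e -> R) (p : seq (R * R))
    (x y : e + 'I_(size p)) : R :=
  match x, y with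
  | inl u, inr i => (nth (0, 0) p i).1 * gamma u
  | inr i, inl u => (nth (0, 0) p i).2 * gamma u
  | _, _ => 0
  end.

(** Union of symmetric EDVWs-based gadgets, the i-th with parameter b = p_i.2
    and all edge weights multiplied by a = p_i.1, with its own auxiliary pair
    e'_i = inr (i, false), e''_i = inr (i, true):
    v -> e'_i and e''_i -> v of weight a*gamma v, e'_i -> e''_i of weight a*b. *)
Definition sym_union_W (e : finType) (gamma : e -> R) (p : seq (R * R))
    (x y : e + ('I_(size p) * bool)) : R :=
  match x, y with
  | inl u, inr (i, false) => (nth (0, 0) p i).1 * gamma u
  | inr (i, true), inl u => (nth (0, 0) p i).1 * gamma u
  | inr (i, false), inr (j, true) =>
      if i == j then (nth (0, 0) p i).1 * (nth (0, 0) p i).2 else 0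
  | _, _ => 0
  end.

Definition concave_on (lo hi : R) (g : R -> R) : Prop :=
  forall x y t, lo <= x <= hi -> lo <= y <= hi -> 0 <= t <= 1 ->
    t * g x + (1 - t) * g y <= g (t * x + (1 - t) * y).

End Defs.

Arguments asym_union_W {R e} gamma p x y.
Arguments sym_union_W {R e} gamma p x y.

From mathcomp Require Import all_boot all_order all_algebra.
From mathcomp Require Import ring lra.
Set Implicit Arguments. Unset Strict Implicit. Unset Printing Implicit Defensive.
Import Order.TTheory GRing.Theory Num.Theory.
Local Open Scope ring_scope.

(* A concave g agrees, on any finite strictly increasing list of knots, with its
   piecewise-linear interpolant, which is a combination of hinge functions
   x |-> min x q whose coefficients are the drops of slope at the knots; by
   concavity these are nonnegative except possibly at the last knot.  For (i),
   with G = gamma(e), the knot G is added last, and g G = 0 turns the remaining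
   linear term into hinges min ((G - q) x, q (G - x)) = G min x q - q x.  For
   (ii) one evaluates g at min x (G - x) <= G/2, where symmetry makes the last
   slope nonnegative.  Each hinge evaluated at gamma(S) is the splitting function
   of one EDVW gadget, and since the gadgets only share the vertices of e, the
   cut of their union is the sum of their cuts, each auxiliary vertex being
   placed optimally on its own. *)

Section PiecewiseLinear.
Variables (R : realFieldType) (y : R -> R).

Definition slope (u v : R) : R := (y v - y u) / (v - u).

Definition first_slope (p : R) (l : seq R) : R :=
  if l is b :: _ then slope p b else 0.

(* The slope after the last knot of l counts as 0. *)
Fixpoint slope_drop (p : R) (l : seq R) (q : R) : R :=
  match l with
  | [::] => 0
  | b :: l' => if q == b then slope p b - first_slope b l' else slope_drop b l' q
  end.

Lemma slope_drop_cons p b l q :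
  path <%R p (b :: l) -> q \in l -> slope_drop p (b :: l) q = slope_drop b l q.
Proof.
move=> /= /andP[_ bl] ql.
have bq : b < q by move/allP: (order_path_min lt_trans bl); apply.
by rewrite /= gt_eqF.
Qed.

Lemma sum_slope_drop p l :
  path <%R p l -> \sum_(q <- l) slope_drop p l q = first_slope p l.
Proof.
elim: l p => [|b l IH] p pl; first by rewrite big_nil.
rewrite big_cons /= eqxx (eq_big_seq (slope_drop b l)) => [|q]; last exact: slope_drop_cons.
by case/andP: pl => _ /IH ->; rewrite subrK.
Qed.

Lemma slope_drop_expansion p l x : path <%R p l -> x \in p :: l ->
  y x = y p + \sum_(q <- l) slope_drop p l q * (Num.min x q - p).
Proof.
elim: l p => [|b l IH] p pl; first by rewrite inE => /eqP ->; rewrite big_nil addr0.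
have [pb bl] := andP pl.
have l_gt_p q : q \in b :: l -> p < q.
  by move/allP: (order_path_min lt_trans pl); apply.
rewrite inE => /predU1P[->|xbl].
  rewrite big1_seq ?addr0 // => q /andP[_ /l_gt_p pq].
  by rewrite min_l ?subrr ?mulr0 // ltW.
have bx : b <= x.
  case/predU1P: xbl => [->//|xl].
  by apply: ltW; move/allP: (order_path_min lt_trans bl); apply.
rewrite big_cons (min_r bx) [slope_drop _ _ b]/= eqxx.
under eq_big_seq => q ql.
  rewrite (slope_drop_cons pl ql) (_ : Num.min x q - p = (Num.min x q - b) + (b - p));
    last by ring.
  rewrite mulrDr.
  over.
rewrite big_split /= -mulr_suml sum_slope_drop // {1}(IH b bl xbl) /slope.
have bp_neq0 : b - p != 0 by rewrite subr_eq0 gt_eqF.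
by field.
Qed.

Lemma slope_drop_ge0 (D : pred R) p l q :
  path <%R p l -> all D (p :: l) ->
  (forall u v w, D u -> D v -> D w -> u < v -> v < w -> slope v w <= slope u v) ->
  q \in l -> (q = last p l -> forall u, D u -> u < q -> 0 <= slope u q) ->
  0 <= slope_drop p l q.
Proof.
move=> + + slope_dec; elim: l p => [|b l IH] p //= /andP[pb bl] /and3P[Dp Db Dl].
rewrite inE; case: eqP => [-> _|_ /= ql last_ge0]; last by apply: IH; rewrite //= Db.
case: l bl Dl {IH} => [|c l] /= => [_ _ /(_ erefl)|/andP[bc _] /andP[Dc _] _].
  by rewrite subr0; apply.
by rewrite subr_ge0 slope_dec.
Qed.

End PiecewiseLinear.

Section Concave.
Variables (R : realFieldType) (lo hi : R) (g : R -> R).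
Hypothesis g_concave : concave_on lo hi g.

Lemma concave_chord u v w : lo <= u -> u < v -> v < w -> w <= hi ->
  g u * (w - v) + g w * (v - u) <= g v * (w - u).
Proof.
move=> lo_u uv vw w_hi.
have wu : 0 < w - u by rewrite subr_gt0 (lt_trans uv).
pose t := (w - v) / (w - u).
have t_ge0 : 0 <= t by rewrite divr_ge0 // ltW // subr_gt0.
have t_le1 : t <= 1 by rewrite ler_pdivrMr // mul1r; lra.
have v_conv : t * u + (1 - t) * w = v by rewrite /t; field; rewrite gt_eqF.
have conv : t * g u + (1 - t) * g w <= g v.
  by rewrite -[in X in _ <= X]v_conv; apply: g_concave; apply/andP; split; lra.
have -> : g u * (w - v) + g w * (v - u) = (t * g u + (1 - t) * g w) * (w - u).
  by rewrite /t; field; rewrite gt_eqF.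
by rewrite ler_pM2r.
Qed.

Lemma concave_slope_le u v w : lo <= u -> u < v -> v < w -> w <= hi ->
  slope g v w <= slope g u v.
Proof.
move=> lo_u uv vw w_hi; have := concave_chord lo_u uv vw w_hi.
have vu : 0 < v - u by rewrite subr_gt0.
have wv : 0 < w - v by rewrite subr_gt0.
rewrite /slope ler_pdivrMr // mulrAC ler_pdivlMr //; nra.
Qed.

End Concave.

Lemma symmetric_concave_le (R : realFieldType) (G : R) (g : R -> R) u v :
  concave_on 0 G g -> (forall x, 0 <= x <= G -> g x = g (G - x)) ->
  0 <= u -> u < v -> v <= G / 2 -> g u <= g v.
Proof.
move=> g_concave g_sym u_ge0 uv v_le.
have v_lt : v < G - u by lra.
have Gu_le : G - u <= G by lra.
have uu_lt : 0 < G - u - u by lra.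
have := concave_chord g_concave u_ge0 uv v_lt Gu_le.
rewrite -g_sym; [nra | lra].
Qed.

Lemma path_lt_sort (R : realFieldType) (p : R) (Q : seq R) :
  uniq Q -> (forall q, q \in Q -> p < q) -> path <%R p (sort <=%R Q).
Proof.
move=> Q_uniq Q_gt; rewrite path_sortedE ?sort_lt_sorted //; last exact: lt_trans.
by rewrite Q_uniq andbT; apply/allP => q; rewrite mem_sort; apply: Q_gt.
Qed.

Lemma min_asym_hinge (R : realFieldType) (G q x : R) :
  0 <= G -> Num.min ((G - q) * x) (q * (G - x)) = G * Num.min x q - q * x.
Proof.
move=> G_ge0; rewrite !minEle.
case: (leP x q) => xq; case: leP => h; nra.
Qed.

Section ConcaveExpansion.
Variables (R : realFieldType) (G : R) (g : R -> R).
Hypotheses (g_concave : concave_on 0 G g) (g0 : g 0 = 0).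

Lemma concave_asym_hinge_expansion (Q : seq R) :
  0 < G -> g G = 0 -> uniq Q -> (forall q, q \in Q -> 0 < q < G) ->
  exists a : R -> R, (forall q, q \in Q -> 0 <= a q) /\
    forall x, x \in [:: 0, G & Q] ->
      g x = \sum_(q <- Q) a q * Num.min ((G - q) * x) (q * (G - x)).
Proof.
move=> G_gt0 gG Q_uniq Q_range.
pose s := sort <=%R Q; pose l := rcons s G.
have s_range q : q \in s -> 0 < q < G by rewrite mem_sort; apply: Q_range.
have l_path : path <%R 0 l.
  rewrite rcons_path path_lt_sort => [|//|q /Q_range /andP[]//].
  by have /predU1P[->//|/s_range/andP[]] := mem_last 0 s.
pose c := slope_drop g 0 l.
have expansion x : x \in 0 :: l -> x <= G ->
    g x = \sum_(q <- s) c q * Num.min x q + c G * x.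
  move=> xl xG; rewrite (slope_drop_expansion g l_path xl) g0 add0r big_rcons /=.
  by rewrite subr0 (min_l xG); under eq_bigr do rewrite subr0.
have sum_cq : \sum_(q <- s) c q * q = - (c G * G).
  have G_l : G \in 0 :: l by rewrite !inE mem_rcons inE eqxx orbT.
  have := expansion G G_l (lexx G); rewrite gG => /eqP; rewrite eq_sym addr_eq0 => /eqP <-.
  by apply: eq_big_seq => q /s_range /andP[_ /ltW qG]; rewrite min_r.
exists (fun q => c q / G); split.
  move=> q qQ; apply: divr_ge0; last exact: ltW.
  apply: (slope_drop_ge0 (D := [pred x | 0 <= x <= G]) l_path).
  - rewrite /= lexx ltW //=; apply/allP => x; rewrite mem_rcons inE.
    by case/predU1P=> [->|/s_range/andP[x0 xG]] /=; apply/andP; split; lra.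
  - move=> u v w /andP[u0 _] _ /andP[_ wG] uv vw; exact: (concave_slope_le g_concave).
  - by rewrite mem_rcons inE mem_sort qQ orbT.
  - by rewrite last_rcons => qG; have := Q_range q qQ; rewrite qG ltxx andbF.
move=> x; rewrite !inE => x_in.
have [x_l x_range] : x \in 0 :: l /\ 0 <= x <= G.
  rewrite !inE mem_rcons inE mem_sort; case/or3P: x_in => [/eqP->|/eqP->|xQ].
  - by rewrite eqxx lexx ltW.
  - by rewrite eqxx orbT lexx ltW.
  - by rewrite xQ !orbT; have /andP[/ltW-> /ltW->] := Q_range x xQ.
rewrite -(perm_big _ (permEl (perm_sort <=%R Q))) expansion //; last by case/andP: x_range.
under eq_big_seq => q _ do rewrite min_asym_hinge ?(ltW G_gt0) //.
have G_neq0 : G != 0 by rewrite gt_eqF.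
have -> : c G * x = - (x / G) * \sum_(q <- s) c q * q by rewrite sum_cq; field.
rewrite mulr_sumr -big_split /=; apply: eq_bigr => q _; by field.
Qed.

Lemma concave_sym_hinge_expansion (Q : seq R) :
  (forall x, 0 <= x <= G -> g x = g (G - x)) ->
  uniq Q -> (forall q, q \in Q -> 0 < q <= G / 2) ->
  exists a : R -> R, (forall q, q \in Q -> 0 <= a q) /\
    forall x, x \in 0 :: Q -> g x = \sum_(q <- Q) a q * Num.min x q.
Proof.
move=> g_sym Q_uniq Q_range.
pose s := sort <=%R Q.
have s_range q : q \in s -> 0 < q <= G / 2 by rewrite mem_sort; apply: Q_range.
have s_path : path <%R 0 s by apply: path_lt_sort => // q /Q_range /andP[].
exists (slope_drop g 0 s); split.
  move=> q qQ; have G_ge0 : 0 <= G by have := Q_range q qQ; lra.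
  apply: (slope_drop_ge0 (D := [pred x | 0 <= x <= G / 2]) s_path).
  - rewrite /= lexx divr_ge0 //=; apply/allP => x /s_range /andP[x0 xG] /=.
    by rewrite xG ltW.
  - move=> u v w /andP[u0 _] _ /andP[_ wG] uv vw.
    by apply: (concave_slope_le g_concave) => //; lra.
  - by rewrite mem_sort.
  - move=> _ u /andP[u0 _] uq; have /andP[_ qG] := Q_range q qQ.
    apply: divr_ge0; rewrite subr_ge0; last exact: ltW.
    exact: (symmetric_concave_le g_concave g_sym u0 uq qG).
move=> x x_in.
rewrite -(perm_big _ (permEl (perm_sort <=%R Q))) (slope_drop_expansion g s_path) ?g0 ?add0r.
  by apply: eq_bigr => q _; rewrite subr0.
by move: x_in; rewrite !in_cons mem_sort.
Qed.

End ConcaveExpansion.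

Section Cuts.
Variable R : realFieldType.

Lemma cut_sumType (A B : finType) (W : A + B -> A + B -> R) (T : {set A + B}) :
  cut W T =
    \sum_(x | inl x \in T) (\sum_(y | inl y \notin T) W (inl x) (inl y)
                            + \sum_(j | inr j \notin T) W (inl x) (inr j))
  + \sum_(i | inr i \in T) (\sum_(y | inl y \notin T) W (inr i) (inl y)
                            + \sum_(j | inr j \notin T) W (inr i) (inr j)).
Proof.
rewrite /cut big_sumType; congr (_ + _); apply: eq_bigr => u _;
  by rewrite big_sumType; congr (_ + _); apply: eq_bigl => v; rewrite in_setC.
Qed.

Variables (e : finType) (gamma : e -> R).

Lemma gammaS_preim (B : finType) (T : {set e + B}) :
  gammaS gamma [set x | inl x \in T] = \sum_(x | inl x \in T) gamma x.
Proof. by apply: eq_bigl => x; rewrite inE. Qed.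

Lemma gammaS_preimC (B : finType) (T : {set e + B}) :
  gammaS gamma (~: [set x | inl x \in T]) = \sum_(x | inl x \notin T) gamma x.
Proof. by apply: eq_bigl => x; rewrite !inE. Qed.

Variable p : seq (R * R).
Local Notation p_ i := (nth (0, 0) p i).

Lemma cut_asym_union (T : {set e + 'I_(size p)}) :
  let S := [set x | inl x \in T] in
  cut (asym_union_W gamma p) T =
  \sum_(i < size p) (if inr i \in T then (p_ i).2 * gammaS gamma (~: S)
                     else (p_ i).1 * gammaS gamma S).
Proof.
rewrite cut_sumType /= gammaS_preim gammaS_preimC.
rewrite [RHS](bigID (fun i => inr i \in T)) [RHS]addrC /=.
congr (_ + _).
- under eq_bigr do rewrite big1 ?add0r //.
  rewrite exchange_big /=; apply: eq_bigr => i /negbTE ->.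
  by rewrite mulr_sumr.
- apply: eq_bigr => i ->.
  by rewrite [X in _ + X]big1 ?addr0 // mulr_sumr.
Qed.

Lemma sum_pair_bool (I : finType) (F : I * bool -> R) :
  \sum_z F z = \sum_i (F (i, true) + F (i, false)).
Proof.
rewrite (eq_bigr (fun i => \sum_b F (i, b))) => [|i _]; last by rewrite big_bool.
by rewrite pair_bigA; apply: eq_bigr => -[].
Qed.

Lemma cut_sym_union (T : {set e + ('I_(size p) * bool)}) :
  let S := [set x | inl x \in T] in
  cut (sym_union_W gamma p) T =
  \sum_(i < size p)
    ((if inr (i, true) \in T then (p_ i).1 * gammaS gamma (~: S) else 0)
   + (if inr (i, false) \in T then
        (if inr (i, true) \in T then 0 else (p_ i).1 * (p_ i).2)
      else (p_ i).1 * gammaS gamma S)).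
Proof.
rewrite cut_sumType /= gammaS_preim gammaS_preimC.
under eq_bigr do rewrite big1 ?add0r //.
rewrite exchange_big /= big_mkcond [X in _ + X]big_mkcond !sum_pair_bool -big_split /=.
apply: eq_bigr => i _.
have cut_pair : \sum_(j | inr j \notin T) sym_union_W gamma p (inr (i, false)) (inr j) =
    if inr (i, true) \in T then 0 else (p_ i).1 * (p_ i).2.
  rewrite big_mkcond sum_pair_bool (bigD1 i) //= big1 => [|j /negbTE ji].
    by rewrite eqxx if_same !addr0 if_neg.
  by rewrite eq_sym ji !if_same addr0.
rewrite !big1_eq ?addr0 ?add0r cut_pair -!mulr_sumr.
rewrite if_same add0r; case: (inr (i, false) \in T) => /=; first by rewrite add0r.
by rewrite addr0 addrC.
Qed.

End Cuts.

Section SymCost.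
Variable R : realFieldType.
Variables (m1 m2 m3 : R).

(* Cut of the i-th symmetric gadget when e''_i (resp. e'_i) lies on the side
   of S iff bt (resp. bf), with m1, m2, m3 the weighted capacities of the
   edges into e'_i, out of e''_i and from e'_i to e''_i. *)
Definition sym_cost (bt bf : bool) : R :=
  (if bt then m2 else 0) + (if bf then (if bt then 0 else m3) else m1).

Lemma sym_cost_ge bt bf : 0 <= m2 -> Num.min (Num.min m1 m2) m3 <= sym_cost bt bf.
Proof.
rewrite /sym_cost => m2_ge0.
have [min1 min2 min3] : [/\ Num.min (Num.min m1 m2) m3 <= m1,
    Num.min (Num.min m1 m2) m3 <= m2 & Num.min (Num.min m1 m2) m3 <= m3].
  by split; rewrite !ge_min lexx ?orbT.
by case: bt; case: bf; lra.
Qed.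

Lemma sym_cost_min :
  let bf := ~~ (m1 <= Num.min m2 m3) in
  Num.min (Num.min m1 m2) m3 = sym_cost (bf && (m2 <= m3)) bf.
Proof.
rewrite /sym_cost -minA; case: leP => _ /=; first by rewrite add0r.
by rewrite minEle; case: ifP; rewrite ?addr0 ?add0r.
Qed.

End SymCost.

Section Gadgets.
Variables (R : realFieldType) (e : finType) (gamma : e -> R).

Lemma asym_union_split (p : seq (R * R)) (f : {set e} -> R) :
  (forall S, f S = \sum_(x <- p) Num.min (x.1 * gammaS gamma S) (x.2 * gammaS gamma (~: S))) ->
  is_gadget_split (@inl e _) (asym_union_W gamma p) f.
Proof.
move=> fE S; rewrite fE (big_nth (0, 0)) big_mkord; split.
  pose T := [set z : e + 'I_(size p) | match z with
    | inl x => x \in S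
    | inr i => (nth (0, 0) p i).2 * gammaS gamma (~: S) <= (nth (0, 0) p i).1 * gammaS gamma S
    end].
  have TS : [set x | inl x \in T] = S by apply/setP => x; rewrite !inE.
  exists T; split => //; rewrite cut_asym_union TS.
  by apply: eq_bigr => i _; rewrite inE minC minEle.
move=> T TS; rewrite cut_asym_union TS.
by apply: ler_sum => i _; case: ifP; rewrite ge_min lexx ?orbT.
Qed.

Lemma sym_union_split (p : seq (R * R)) (f : {set e} -> R) :
  (forall x, x \in p -> 0 <= x.1) -> (forall v, 0 <= gamma v) ->
  (forall S, f S = \sum_(x <- p)
     Num.min (Num.min (x.1 * gammaS gamma S) (x.1 * gammaS gamma (~: S))) (x.1 * x.2)) ->
  is_gadget_split (@inl e _) (sym_union_W gamma p) f.
Proof.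
move=> p_ge0 gamma_ge0 fE S; rewrite fE (big_nth (0, 0)) big_mkord.
pose m1 i := (nth (0, 0) p i).1 * gammaS gamma S.
pose m2 i := (nth (0, 0) p i).1 * gammaS gamma (~: S).
pose m3 i := (nth (0, 0) p i).1 * (nth (0, 0) p i).2.
split.
  pose bf i := ~~ (m1 i <= Num.min (m2 i) (m3 i)).
  pose T := [set z : e + ('I_(size p) * bool) | match z with
    | inl x => x \in S
    | inr (i, b) => bf i && (b ==> (m2 i <= m3 i))
    end].
  have TS : [set x | inl x \in T] = S by apply/setP => x; rewrite !inE.
  exists T; split => //; rewrite cut_sym_union TS.
  by apply: eq_bigr => i _; rewrite (sym_cost_min (m1 i)) !inE /= andbT.
move=> T TS; rewrite cut_sym_union TS; apply: ler_sum => i _.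
have m2_ge0 : 0 <= m2 i.
  by apply: mulr_ge0; [apply: p_ge0; rewrite mem_nth | apply: sumr_ge0].
exact: (sym_cost_ge _ _ _ _ m2_ge0).
Qed.

End Gadgets.

Section Reducible.
Variables (R : realFieldType) (e : finType) (gamma : e -> R).
Hypothesis gamma_ge0 : forall v, 0 <= gamma v.

Lemma asym_union_W_ge0 (p : seq (R * R)) :
  (forall x, x \in p -> 0 <= x.1 /\ 0 <= x.2) ->
  forall u v, 0 <= asym_union_W gamma p u v.
Proof.
move=> p_ge0 [u|i] [v|j] //=; apply: mulr_ge0 => //.
- by have [] := p_ge0 _ (mem_nth (0, 0) (ltn_ord j)).
- by have [] := p_ge0 _ (mem_nth (0, 0) (ltn_ord i)).
Qed.

Lemma asym_union_reducible (p : seq (R * R)) (f : {set e} -> R) :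
  (forall x, x \in p -> 0 <= x.1 /\ 0 <= x.2) ->
  is_gadget_split (@inl e _) (asym_union_W gamma p) f -> graph_reducible f.
Proof.
move=> p_ge0 f_split; exists _, inl, (asym_union_W gamma p).
by split; [move=> ? ? [] | split; [exact: asym_union_W_ge0 |]].
Qed.

End Reducible.

Section Hyperedge.
Variables (R : realFieldType) (e : finType) (gamma : e -> R).
Local Notation gS := (gammaS gamma).
Local Notation Ge := (gammaS gamma setT).

Lemma gammaSC S : gS (~: S) = Ge - gS S.
Proof. by rewrite /gammaS [in RHS](big_setID S) /= setTI setTD addrC addrK. Qed.

Lemma Qs_range q : q \in Qs gamma -> 0 < q <= Ge / 2.
Proof. by rewrite mem_undup => /mapP[S]; rewrite mem_filter => /andP[+ _] ->. Qed.

Hypothesis gamma_gt0 : forall v, 0 < gamma v.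

Lemma gammaS_gt0 S : S != set0 -> 0 < gS S.
Proof.
case/set0Pn=> x xS; rewrite /gammaS (bigD1 x) //= ltr_pwDl //.
by apply: sumr_ge0 => v _; apply: ltW.
Qed.

Lemma gammaS_ge0 S : 0 <= gS S.
Proof. by have [->|/gammaS_gt0/ltW//] := eqVneq S set0; rewrite /gammaS big_set0. Qed.

Lemma Qa_range q : q \in Qa gamma -> 0 < q < Ge.
Proof.
rewrite mem_undup => /mapP[S]; rewrite mem_filter => /andP[/andP[S0 ST] _] ->.
rewrite gammaS_gt0 //= -subr_gt0 -gammaSC gammaS_gt0 //.
by apply: contra ST => /eqP SC0; rewrite -[S]setCK SC0 setC0.
Qed.

Lemma gammaS_mem_Qa S : gS S \in [:: 0, Ge & Qa gamma].
Proof.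
have [->|S0] := eqVneq S set0; first by rewrite /gammaS big_set0 mem_head.
have [->|ST] := eqVneq S setT; first by rewrite !inE eqxx orbT.
by rewrite !inE mem_undup; apply/or3P/Or33/map_f; rewrite mem_filter S0 ST mem_enum in_setT.
Qed.

Lemma gammaS_le S : gS S <= Ge.
Proof. by rewrite -subr_ge0 -gammaSC gammaS_ge0. Qed.

Lemma gammaS_mem_Qs S : gS S <= Ge / 2 -> gS S \in 0 :: Qs gamma.
Proof.
move=> S_le; have := gammaS_ge0 S; rewrite le0r => /predU1P[->|S_gt0]; first exact: mem_head.
by rewrite inE mem_undup map_f ?orbT // mem_filter S_gt0 S_le mem_enum in_setT.
Qed.

Lemma min_gammaS_mem_Qs S : Num.min (gS S) (gS (~: S)) \in 0 :: Qs gamma.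
Proof.
by rewrite minEle; case: leP => S_le; apply: gammaS_mem_Qs; move: S_le; rewrite !gammaSC; lra.
Qed.

Variable g : R -> R.
Hypotheses (g_concave : concave_on 0 Ge g) (g0 : g 0 = 0).

Lemma asym_hinge_decomposition : (0 < #|e|)%N -> g Ge = 0 ->
  exists a : R -> R, (forall q, q \in Qa gamma -> 0 <= a q) /\
    forall S, g (gS S) =
      \sum_(q <- Qa gamma) a q * Num.min ((Ge - q) * gS S) (q * gS (~: S)).
Proof.
move=> /card_gt0P[x _] gGe.
have Ge_gt0 : 0 < Ge by apply/gammaS_gt0/set0Pn; exists x; rewrite in_setT.
have [a [a_ge0 g_exp]] :=
  concave_asym_hinge_expansion g_concave g0 Ge_gt0 gGe (undup_uniq _) Qa_range.
by exists a; split => // S; rewrite g_exp ?gammaS_mem_Qa // gammaSC.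
Qed.

Lemma sym_hinge_decomposition : (forall x, 0 <= x <= Ge -> g x = g (Ge - x)) ->
  exists a : R -> R, (forall q, q \in Qs gamma -> 0 <= a q) /\
    forall S, g (gS S) =
      \sum_(q <- Qs gamma) a q * Num.min (Num.min (gS S) (gS (~: S))) q.
Proof.
move=> g_sym; have [a [a_ge0 g_exp]] :=
  concave_sym_hinge_expansion g_concave g0 g_sym (undup_uniq _) Qs_range.
exists a; split => // S; rewrite -g_exp ?min_gammaS_mem_Qs //.
by rewrite minEle gammaSC; case: ifP => // _; rewrite g_sym ?gammaS_ge0 ?gammaS_le.
Qed.

End Hyperedge.

Unset Implicit Arguments.
Theorem theorem3 (R : realFieldType) (e : finType) (gamma : e -> R) (g : R -> R) :
  (1 < #|e|)%N ->
  (forall v, 0 < gamma v) ->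
  concave_on 0 (gammaS gamma setT) g ->
  (forall x, 0 <= x <= gammaS gamma setT -> 0 <= g x) ->
  g 0 = 0 -> g (gammaS gamma setT) = 0 ->
  let Ge := gammaS gamma setT in
  let w := fun S : {set e} => g (gammaS gamma S) in
  (* (i) *)
  (graph_reducible w /\
   exists a : R -> R,
     (forall q, q \in Qa gamma -> 0 <= a q) /\
     (forall S : {set e},
        w S = \sum_(q <- Qa gamma)
                a q * Num.min ((Ge - q) * gammaS gamma S) (q * gammaS gamma (~: S))) /\
     is_gadget_split (@inl e _)
       (asym_union_W gamma [seq (a q * (Ge - q), a q * q) | q <- Qa gamma]) w)
  /\
  (* (ii) *)
  ((forall x, 0 <= x <= Ge -> g x = g (Ge - x)) ->
   exists a : R -> R,
     (forall q, q \in Qs gamma -> 0 <= a q) /\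
     (forall S : {set e},
        w S = \sum_(q <- Qs gamma)
                a q * Num.min (Num.min (gammaS gamma S) (gammaS gamma (~: S))) q) /\
     is_gadget_split (@inl e _)
       (sym_union_W gamma [seq (a q, q) | q <- Qs gamma]) w).
Proof.
move=> e_gt1 gamma_gt0 g_concave _ g0 gGe Ge w; split.
  have [a [a_ge0 w_exp]] := asym_hinge_decomposition gamma_gt0 g_concave g0 (ltnW e_gt1) gGe.
  have w_split : is_gadget_split inl
      (asym_union_W gamma [seq (a q * (Ge - q), a q * q) | q <- Qa gamma]) w.
    apply: asym_union_split => S; rewrite /w w_exp big_map; apply: eq_big_seq => q qQ /=.
    by rewrite -!mulrA minr_pMr ?a_ge0.
  split; last by exists a.
  apply: asym_union_reducible w_split => [v|_ /mapP[q qQ ->] /=]; first exact: ltW.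
  have /andP[q_gt0 q_lt] := Qa_range gamma_gt0 qQ.
  by split; apply: mulr_ge0; rewrite ?a_ge0 ?subr_ge0 ?ltW.
move=> g_sym; have [a [a_ge0 w_exp]] := sym_hinge_decomposition gamma_gt0 g_concave g0 g_sym.
exists a; split=> //; split=> //.
apply: sym_union_split => [_ /mapP[q qQ ->]|v|S]; [exact: a_ge0|exact: ltW|].
rewrite /w w_exp big_map; apply: eq_big_seq => q qQ /=.
by rewrite -!minr_pMr ?a_ge0.
Qed.
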